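(* Let $\mathbf d=(d_1,\ldots,d_n)$ be a degree sequence, $n\ge 3$, and define $g_n:[n]\to[0,\infty)$ by \[g_n(k)=\frac{k!}{\langle n\rangle_k}\sum_{1\le i_1<\cdots<i_k\le n}\ \prod_{j=1}^k d_{i_j}.\] Then for every $v\in[n]$ and $2\le k\le n-1$, \[\mathbb P(\mathfrak s_n(v)>k)=g_n(k)-\frac{k\,d_v}{n-k+1}\,\mathbb P(\mathfrak s_n(v)>k-1).\]
   Context: A degree sequence is $\mathbf d=(d_1,\ldots,d_n)\in\mathbb N_0^n$ with $\sum_j d_j=n$. Let $\mathfrak F(\mathbf d)=\{f:[n]\to[n]: |f^{-1}(\{i\})|=d_i\ \forall i\}$ and let $F$ be uniform on $\mathfrak F(\mathbf d)$. For $f:V\to V$, $v\in V$, the six-length is $\mathfrak s_f(v)=\min\{k\in\mathbb N: f^{(k)}(v)\in\{f^{(j)}(v):0\le j\le k-1\}\}$ ($f^{(k)}$ the $k$-fold composition, $f^{(0)}=\mathrm{id}$); $\mathfrak s_n(v)=\mathfrak s_F(v)$. $\langle n\rangle_k=n!/(n-k)!$. *)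

From HB Require Import structures.
From mathcomp Require Import all_boot all_order all_algebra.
Set Implicit Arguments. Unset Strict Implicit. Unset Printing Implicit Defensive.
Import Order.TTheory GRing.Theory Num.Theory.

Definition six_pred (T : finType) (f : T -> T) (x : T) (k : nat) : bool :=
  (0 < k) && (iter k f x \in traject f x k).

Lemma six_pred_ex (T : finType) (f : T -> T) (x : T) : exists k, six_pred f x k.
Proof.
exists #|T|; apply/andP; split; first by apply/card_gt0P; exists x.
apply/negPn; rewrite -looping_uniq; apply/negP => /card_uniqP.
rewrite size_traject => H.
by have := max_card (mem (traject f x #|T|.+1)); rewrite H ltnn.
Qed.

(* six-length s_f(x) = min { k >= 1 : f^(k)(x) \in {f^(j)(x) : 0 <= j <= k-1} } *)
Definition sixlen (T : finType) (f : T -> T) (x : T) : nat := ex_minn (six_pred_ex f x).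

Definition Fd (n : nat) (d : 'I_n -> nat) : {set {ffun 'I_n -> 'I_n}} :=
  [set f : {ffun 'I_n -> 'I_n} | [forall i, #|[set j | f j == i]| == d i]].

(* P(s_n(v) > k) for F uniform on F(d) *)
Definition Pgt (n : nat) (d : 'I_n -> nat) (v : 'I_n) (k : nat) : rat :=
  (#|[set f in Fd d | (k < sixlen f v)%N]|%:R / #|Fd d|%:R)%R.

(* g_n(k) = k!/<n>_k * sum_{i_1<...<i_k} prod_j d_{i_j} ; <n>_k = n ^_ k *)
Definition gn (n : nat) (d : 'I_n -> nat) (k : nat) : rat :=
  ((k`!)%:R / (n ^_ k)%:R *
   (\sum_(S : {set 'I_n} | #|S| == k) \prod_(i in S) d i)%:R)%R.

From HB Require Import structures.
From mathcomp Require Import all_boot all_order all_algebra all_fingroup.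
From mathcomp Require Import zify ring.
Import Order.TTheory GRing.Theory Num.Theory.

(* Pin m arcs a_i -> b_i (distinct tails, distinct heads) of a uniform f in
   F(d).  Pinning one more arc a -> b: all free tails are exchangeable under
   transpositions and together they carry the d_b arcs into b, so the pin holds
   with probability d_b / (n - m); hence all m pins hold with probability
   prod d_(b_i) / <n>_m.  Now s(v) > k means that v, f v, ..., f^k v are
   distinct, so summing over the injective walks avoiding v gives
   P(s(v) > k) = k! e_k / <n>_k, with e_k the k-th elementary symmetric sum of
   the degrees other than d_v.  The recursion is the splitting of the k-th
   elementary symmetric sum of all degrees according to whether v is chosen. *)

Set Implicit Arguments.

Lemma card_set_sum (T : finType) (A : {pred T}) (P : pred T) :
  #|[set x in A | P x]| = \sum_(x in A) P x.
Proof. by rewrite -sum1dep_card big_mkcondr. Qed.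

Section Pinning.

Variables (n : nat) (d : 'I_n -> nat).

Definition pinned (cs : seq ('I_n * 'I_n)) : {set {ffun 'I_n -> 'I_n}} :=
  [set f in Fd d | all (fun p => f p.1 == p.2) cs].

Lemma card_Fd_fiber f b : f \in Fd d -> #|[set j | f j == b]| = d b.
Proof. by rewrite inE => /forallP /(_ b) /eqP. Qed.

(* Precomposing with the transposition of two unpinned points is a bijection
   of [Fd d] that keeps every pin. *)
Lemma card_pinned_fiber_le cs b a1 a2 :
  a1 \notin unzip1 cs -> a2 \notin unzip1 cs ->
  #|[set f in pinned cs | f a1 == b]| <= #|[set f in pinned cs | f a2 == b]|.
Proof.
move=> a1_free a2_free; pose t := tperm a1 a2.
pose swap (f : {ffun 'I_n -> 'I_n}) := [ffun x => f (t x)].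
have swapK : involutive swap by move=> f; apply/ffunP => x; rewrite !ffunE tpermK.
rewrite -(card_imset _ (inv_inj swapK)); apply: subset_leq_card.
apply/subsetP => _ /imsetP [f /setIdP [/setIdP [fF pins] fa1] ->].
rewrite !inE ffunE tpermR fa1 andbT; apply/andP; split.
  apply/forallP => i; rewrite -(card_Fd_fiber i fF).
  have -> : [set j | swap f j == i] = t @^-1: [set j | f j == i].
    by apply/setP => j; rewrite !inE ffunE.
  by rewrite (card_preimset _ (@perm_inj _ t)).
apply/allP => p p_cs; rewrite ffunE tpermD; first exact: (allP pins).
  by apply: contraNneq a1_free => ->; apply: map_f.
by apply: contraNneq a2_free => ->; apply: map_f.
Qed.

Lemma card_pinned_fiber cs a b :
  uniq (unzip1 cs) -> a \notin unzip1 cs -> b \notin unzip2 cs ->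
  #|[set f in pinned cs | f a == b]| * (n - size cs) = d b * #|pinned cs|.
Proof.
move=> uniq_cs a_free b_free; set D := unzip1 cs.
have card_free : #|[predC D]| = n - size cs.
  have := cardC (mem D); rewrite card_ord (card_uniqP uniq_cs) size_map.
  by move: #|[predC D]| => m; lia.
have fiber_free a' : a' \notin D ->
    #|[set f in pinned cs | f a' == b]| = #|[set f in pinned cs | f a == b]|.
  by move=> a'_free; apply/eqP; rewrite eqn_leq !card_pinned_fiber_le.
(* double counting of the pairs (a', f) with a' unpinned and f a' = b *)
transitivity (\sum_(a' in [predC D]) #|[set f in pinned cs | f a' == b]|).
  by rewrite (eq_bigr _ fiber_free) sum_nat_const card_free mulnC.
under eq_bigr => a' _ do rewrite card_set_sum.
rewrite exchange_big /= mulnC -sum_nat_const; apply: eq_bigr => f.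
rewrite inE => /andP [fF /allP pins].
have pinned_not_b a' : a' \in D -> f a' != b.
  case/mapP=> p p_cs ->; rewrite (eqP (pins p p_cs)).
  by apply: contraNneq b_free => <-; apply: map_f.
rewrite -(card_Fd_fiber b fF) -card_set_sum; apply: eq_card => a'; rewrite !inE.
by case: (boolP (a' \in D)) => [/pinned_not_b/negbTE->|].
Qed.

Lemma card_pinned cs : uniq (unzip1 cs) -> uniq (unzip2 cs) ->
  #|pinned cs| * n ^_ (size cs) = #|Fd d| * \prod_(p <- cs) d p.2.
Proof.
elim: cs => [_ _|[a b] cs IH /=].
  by rewrite big_nil ffactn0 !muln1; apply: eq_card => f; rewrite inE andbT.
case/andP=> a_free u1 /andP [b_free u2].
have -> : pinned ((a, b) :: cs) = [set f in pinned cs | f a == b].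
  by apply/setP => f; rewrite !inE /= [(f a == b) && _]andbC andbA.
rewrite ffactnSr mulnA mulnAC card_pinned_fiber // big_cons /=.
by rewrite -mulnA IH // mulnCA.
Qed.

End Pinning.

Lemma traject_eq_pairs (T : eqType) (f : T -> T) x (t : seq T) :
  (traject f x (size t).+1 == x :: t) = all (fun p => f p.1 == p.2) (zip (belast x t) t).
Proof.
elim: t x => [|y t IH] x /=; first by rewrite eqxx.
by rewrite -IH /= !eqseq_cons !eqxx /=; case: eqP => [->|].
Qed.

Lemma sixlen_gtE (T : finType) (f : T -> T) x k :
  (k < sixlen f x) = uniq (traject f x k.+1).
Proof.
rewrite /sixlen; case: ex_minnP => m /andP [m_gt0 m_loops] m_min.
elim: k => [|k IH] //; rewrite trajectSr rcons_uniq -IH andbC.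
apply/idP/andP => [k1_lt_m | [k_lt_m fk1_new]].
  split; first exact: ltnW.
  by apply: contraTN k1_lt_m => fk1_old; rewrite -leqNgt m_min //= /six_pred fk1_old.
rewrite ltn_neqAle k_lt_m andbT; apply/eqP => k1_m.
by move: fk1_new; rewrite k1_m m_loops.
Qed.

Section Walks.

Variables (n : nat) (d : 'I_n -> nat) (v : 'I_n).

Definition esym_without k : nat :=
  \sum_(S : {set 'I_n} | (#|S| == k) && (v \notin S)) \prod_(i in S) d i.

Definition walk (f : 'I_n -> 'I_n) k : k.-tuple 'I_n :=
  Tuple (introT eqP (size_traject f (f v) k)).

Lemma card_sixlen_gt k : #|[set f in Fd d | k < sixlen f v]| =
  \sum_(t : k.-tuple 'I_n | uniq (v :: t))
    #|[set f in Fd d | traject f v k.+1 == v :: t]|.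
Proof.
under [RHS]eq_bigr => t _ do rewrite card_set_sum.
rewrite exchange_big card_set_sum; apply: eq_bigr => f _.
have traject_walk : traject f v k.+1 = v :: walk f k by rewrite trajectS.
rewrite sixlen_gtE traject_walk big_mkcond (bigD1 (walk f k)) //= eqxx.
rewrite big1 ?addn0; first by case: (uniq _).
move=> t; rewrite -val_eqE eq_sym /= => /negbTE t_other.
by case: ifP => // _; rewrite eqseq_cons eqxx t_other.
Qed.

Lemma card_traject_eq k (t : k.-tuple 'I_n) : uniq (v :: t) ->
  #|[set f in Fd d | traject f v k.+1 == v :: t]| * n ^_ k =
  #|Fd d| * \prod_(y <- t) d y.
Proof.
move=> uniq_vt; have size_t : size t = k := size_tuple t.
have uniq_belast : uniq (belast v t).
  by move: uniq_vt; rewrite lastI rcons_uniq => /andP [].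
have -> : [set f in Fd d | traject f v k.+1 == v :: t] = pinned d (zip (belast v t) t).
  by apply/setP => f; rewrite !inE -traject_eq_pairs size_t.
have size_pins : size (zip (belast v t) t) = k by rewrite size_zip size_belast minnn.
have unzip2_pins : unzip2 (zip (belast v t) t) = t by rewrite unzip2_zip ?size_belast.
rewrite -[in n ^_ k]size_pins card_pinned ?unzip2_pins; last by case/andP: uniq_vt.
  by rewrite -[in RHS]unzip2_pins big_map.
by rewrite unzip1_zip ?size_belast.
Qed.

Lemma card_uniq_tuples_onto k (S : {set 'I_n}) : #|S| = k -> v \notin S ->
  #|[set t : k.-tuple 'I_n | uniq (v :: t) && ([set y in t] == S)]| = k`!.
Proof.
move=> card_S v_notin_S; rewrite -ffactnn -[X in X ^_ k]card_S -card_uniq_tuples.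
apply: eq_card => t; rewrite !inE /=; apply/andP/andP => [[/andP [_ uniq_t] /eqP <-]|].
  by split=> //; apply/allP => y y_t; rewrite [_ y]inE.
case=> /allP t_in_S uniq_t; rewrite uniq_t andbT; split.
  by apply: contra v_notin_S; apply: t_in_S.
rewrite eqEcard; apply/andP; split; first by apply/subsetP => y; rewrite inE => /t_in_S.
by rewrite card_S cardsE (card_uniqP uniq_t) size_tuple.
Qed.

Lemma sum_uniq_tuples_prod k :
  \sum_(t : k.-tuple 'I_n | uniq (v :: t)) \prod_(y <- t) d y = k`! * esym_without k.
Proof.
rewrite (partition_big (fun t : k.-tuple 'I_n => [set y in t])
          (fun S : {set 'I_n} => (#|S| == k) && (v \notin S))) /=; last first.
  move=> t /andP [v_notin_t uniq_t]; rewrite cardsE inE v_notin_t andbT.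
  by rewrite (card_uniqP uniq_t) size_tuple.
rewrite big_distrr /=; apply: eq_bigr => S /andP [/eqP card_S v_notin_S].
rewrite (eq_bigr (fun _ => \prod_(i in S) d i)) => [|t /andP [/andP [_ uniq_t] /eqP <-]].
  rewrite sum_nat_const -(card_uniq_tuples_onto card_S v_notin_S).
  by congr (_ * _); apply: eq_card => t; rewrite !inE.
by rewrite big_uniq //; apply: eq_bigl => y; rewrite inE.
Qed.

Lemma esym_split k :
  \sum_(S : {set 'I_n} | #|S| == k.+1) \prod_(i in S) d i =
  esym_without k.+1 + d v * esym_without k.
Proof.
rewrite (bigID (fun S : {set 'I_n} => v \in S)) /= addnC; congr (_ + _).
rewrite (reindex_onto (fun S => v |: S) (fun S => S :\ v)) /=; last first.
  by move=> S /andP [_ v_S]; rewrite setD1K.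
rewrite big_distrr /=; apply: eq_big => S.
  rewrite setU11 andbT cardsU1; case: (boolP (v \in S)) => [v_S | v_notin_S].
    rewrite andbF; apply/negbTE/nandP; right.
    by apply: contraTneq v_S => <-; rewrite !inE eqxx.
  by rewrite setU1K // eqxx andbT add1n eqSS.
by case/andP=> _ /eqP S_def; rewrite big_setU1 //= -S_def !inE eqxx.
Qed.

Lemma card_sixlen_gt_ffact k :
  #|[set f in Fd d | k < sixlen f v]| * n ^_ k = #|Fd d| * (k`! * esym_without k).
Proof.
rewrite card_sixlen_gt big_distrl /= (eq_bigr _ (fun t => card_traject_eq t)).
by rewrite -big_distrr sum_uniq_tuples_prod.
Qed.

End Walks.

Lemma card_Fd_gt0 n (d : 'I_n -> nat) : \sum_(i < n) d i = n -> 0 < #|Fd d|.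
Proof.
move=> sum_d; pose s := flatten [seq nseq (d i) i | i <- enum 'I_n].
have size_s : size s = n.
  rewrite size_flatten /shape -map_comp sumnE big_map -[RHS]sum_d big_enum /=.
  by apply: eq_bigr => i _; rewrite /= size_nseq.
have count_s i : count_mem i s = d i.
  rewrite count_flatten sumnE -map_comp big_map big_enum /= (bigD1 i) //=.
  rewrite count_nseq /= eqxx mul1n big1 ?addn0 // => j j_i.
  by rewrite /= count_nseq /= (negbTE j_i).
apply/card_gt0P; exists [ffun j : 'I_n => nth j s j]; rewrite inE.
apply/forallP => i; rewrite -count_s -sum1dep_card.
rewrite big_mkcond -big_enum -big_mkcond /= sum1_count.
apply/eqP; rewrite -[s in RHS](mkseq_nth i) size_s /mkseq -val_enum_ord -map_comp.
rewrite [RHS]count_map; apply: eq_count => j /=.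
by rewrite ffunE (set_nth_default i) ?size_s.
Qed.

Lemma Pgt_esym n (d : 'I_n -> nat) v k : \sum_(i < n) d i = n -> k <= n ->
  Pgt d v k = ((k`! * esym_without d v k)%:R / (n ^_ k)%:R)%R.
Proof.
move=> sum_d k_le_n; rewrite /Pgt; apply/eqP.
rewrite eqr_div ?pnatr_eq0 -?lt0n ?ffact_gt0 ?card_Fd_gt0 //.
by rewrite -!natrM card_sixlen_gt_ffact mulnC.
Qed.

Unset Implicit Arguments.

Theorem lemma3p3 (n : nat) (d : 'I_n -> nat) (v : 'I_n) (k : nat) :
  (\sum_(i < n) d i)%N = n -> 3 <= n -> 2 <= k -> k <= n - 1 ->
  Pgt d v k = (gn d k - (k * d v)%:R / ((n - k).+1)%:R * Pgt d v k.-1)%R.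
Proof.
move=> sum_d _; case: k => [|j] // _ j_lt_n; rewrite !Pgt_esym //; try lia.
have -> : (n - j.+1).+1 = n - j by lia.
have ffact_neq0 : ((n ^_ j)%:R != 0 :> rat)%R by rewrite pnatr_eq0 -lt0n ffact_gt0; lia.
have sub_neq0 : ((n - j)%:R != 0 :> rat)%R by rewrite pnatr_eq0 -lt0n subn_gt0; lia.
rewrite /gn (esym_split d v) factS ffactnSr !natrM natrD natrM.
by field; rewrite ffact_neq0 sub_neq0.
Qed.
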